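(* Every almost reciprocal Puiseux monoid is a length-finite-factorization monoid (LFFM).
   Context: A Puiseux monoid is an additive submonoid of $(\mathbb{Q}_{\ge 0},+)$. An almost reciprocal Puiseux monoid is a monoid of the form $\langle \frac{c_n}{d_n} \mid n \in \mathbb{N} \rangle$, where $(d_n)_{n\ge 1}$ is a strictly increasing sequence of positive integers whose terms are pairwise relatively prime, and $(c_n)_{n \ge 1}$ is a sequence of positive integers with $\gcd(c_n,d_n)=1$ for every $n$. An atom of $M$ is a nonzero element $a$ such that $a=x+y$ with $x,y\in M$ forces $x=0$ or $y=0$; $M$ is atomic if each element is a finite sum of atoms. For nonzero $x \in M$, a factorization of $x$ is a formal (unordered) sum $a_1+\dots+a_\ell$ of atoms whose value is $x$, of length $\ell$; $\mathsf{Z}(x,\ell)$ denotes the set of factorizations of $x$ of length $\ell$. $M$ is an LFFM if $M$ is atomic and $\mathsf{Z}(x,\ell)$ is finite for every nonzero $x \in M$ and every $\ell \in \mathbb{N}$. *)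

From HB Require Import structures.
From mathcomp Require Import all_boot all_order all_algebra.
Set Implicit Arguments. Unset Strict Implicit. Unset Printing Implicit Defensive.
Import Order.TTheory GRing.Theory Num.Theory.
Local Open Scope ring_scope.

(* The submonoid of (Q,+) generated by g : nat -> rat: all finite sums
   of generators (a multiset of indices s; the empty sum gives 0). *)
Definition gen_monoid (g : nat -> rat) (x : rat) : Prop :=
  exists s : seq nat, x = \sum_(i <- s) g i.

Definition frac_seq (c d : nat -> nat) (n : nat) : rat :=
  (c n)%:R / (d n)%:R.

(* Hypotheses of an almost reciprocal presentation (indices start at 0). *)
Definition almost_reciprocal_data (c d : nat -> nat) : Prop :=
  [/\ (0 < d 0)%N,
      (forall n, (d n < d n.+1)%N),
      (forall m n, m <> n -> coprime (d m) (d n)),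
      (forall n, (0 < c n)%N) &
      (forall n, coprime (c n) (d n))].

Definition almost_reciprocal (M : rat -> Prop) : Prop :=
  exists c d : nat -> nat, almost_reciprocal_data c d /\
    (forall x, M x <-> gen_monoid (frac_seq c d) x).

Definition is_atom (M : rat -> Prop) (a : rat) : Prop :=
  M a /\ a != 0 /\
  forall x y, M x -> M y -> a = x + y -> x = 0 \/ y = 0.

Definition atomic (M : rat -> Prop) : Prop :=
  forall x, M x -> exists s : seq rat,
    (forall a, a \in s -> is_atom M a) /\ x = \sum_(a <- s) a.

(* s (a list of atoms, read up to permutation) is a factorization of x of length l *)
Definition is_factorization_len (M : rat -> Prop) (x : rat) (l : nat)
  (s : seq rat) : Prop :=
  (forall a, a \in s -> is_atom M a) /\ size s = l /\ \sum_(a <- s) a = x.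

Definition finite_Z (M : rat -> Prop) (x : rat) (l : nat) : Prop :=
  exists L : seq (seq rat), forall s, is_factorization_len M x l s ->
    exists2 t, t \in L & perm_eq s t.

Definition LFFM (M : rat -> Prop) : Prop :=
  atomic M /\ forall x l, M x -> x != 0 -> finite_Z M x l.

(* Only generators can be atoms, and c_n/d_n is an atom as soon as d_n > 1:
   a sum of other generators has a denominator coprime to d_n, whereas the
   reduced denominator of c_n/d_n is d_n.  As d_n > 1 for n > 0, every
   generator is a sum of atoms.  For finiteness, let q be the denominator of
   x.  If c_n/d_n occurs k times in a factorization of x, then k c_n/d_n is x
   minus a sum of other generators.  Since the d_n are pairwise coprime, d_n
   is coprime to q for all n >= B, and then this forces d_n | k <= l.  So a
   factorization of length l only uses the atoms c_n/d_n with
   n < max(B, l). *)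

From mathcomp Require Import all_boot all_order all_algebra.
From Stdlib Require Import Classical FunctionalExtensionality PropExtensionality.
From mathcomp Require Import lra.
Set Implicit Arguments. Unset Strict Implicit. Unset Printing Implicit Defensive.
Import Order.TTheory GRing.Theory Num.Theory.
Local Open Scope ring_scope.

Definition coprime_denom (N : nat) (y : rat) : Prop :=
  exists2 P : nat, coprime P N & y * P%:R \is a Num.int.

Lemma coprime_denom0 N : coprime_denom N 0.
Proof. by exists 1%N; rewrite ?coprime1n // mul0r rpred0. Qed.

Lemma coprime_denomD N x y :
  coprime_denom N x -> coprime_denom N y -> coprime_denom N (x + y).
Proof.
move=> [P cP xP] [Q cQ yQ]; exists (P * Q)%N; first by rewrite coprimeMl cP.
rewrite natrM mulrDl mulrA [y * _]mulrCA.
by apply: rpredD; apply: rpredM => //; apply: natr_int.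
Qed.

Lemma coprime_denomN N x : coprime_denom N x -> coprime_denom N (- x).
Proof. by move=> [P cP xP]; exists P; rewrite // mulNr rpredN. Qed.

Lemma coprime_denom_sum N (I : Type) (r : seq I) (P : pred I) (F : I -> rat) :
  (forall i, P i -> coprime_denom N (F i)) ->
  coprime_denom N (\sum_(i <- r | P i) F i).
Proof.
move=> FN; apply: big_ind => //; [exact: coprime_denom0 | exact: coprime_denomD].
Qed.

Lemma coprime_denom_divn N m P :
  (0 < P)%N -> coprime P N -> coprime_denom N (m%:R / P%:R).
Proof.
by move=> P0 cP; exists P; rewrite // divfK ?pnatr_eq0 -?lt0n ?natr_int.
Qed.

Lemma coprime_denom_denq N x : coprime `|denq x| N -> coprime_denom N x.
Proof.
move=> cx; exists `|denq x|%N => //.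
by rewrite natr_absz gtr0_norm ?denq_gt0 // -numqE intr_int.
Qed.

Lemma coprime_denom_dvdn N m :
  (0 < N)%N -> coprime_denom N (m%:R / N%:R) -> (N %| m)%N.
Proof.
move=> N0 [P cP /intrP[z Hz]].
have ENz : (m * P)%:Z = z * N%:Z.
  apply: (@intr_inj rat); rewrite intrM /= -Hz -!pmulrn natrM.
  by rewrite mulrAC divfK // pnatr_eq0 -lt0n.
have : (N%:Z %| (m * P)%:Z)%Z by rewrite ENz dvdz_mull.
by rewrite dvdzE /= Gauss_dvdl // coprime_sym.
Qed.

Lemma sum_count_mem (s : seq rat) a :
  \sum_(b <- s) b = a *+ count_mem a s + \sum_(b <- s | b != a) b.
Proof.
rewrite (bigID (pred1 a)) /=; congr (_ + _).
rewrite (eq_bigr (fun=> a)) => [|b /eqP //].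
by rewrite big_const_seq iter_addr_0.
Qed.

Lemma coprime_eventually (d : nat -> nat) :
  (forall m n, m <> n -> coprime (d m) (d n)) ->
  forall q, (0 < q)%N -> exists B, forall n, (B <= n)%N -> coprime q (d n).
Proof.
move=> dcop; elim/ltn_ind => q IH q_gt0.
have [[n0 qn0] | all_coprime] :=
  classic (exists n0, ~~ coprime q (d n0)); last first.
  by exists 0%N => n _; apply/negPn/negP => qn; apply: all_coprime; exists n.
set p := gcdn q (d n0).
have p_gt1 : (1 < p)%N by rewrite ltn_neqAle eq_sym qn0 gcdn_gt0 q_gt0.
have pq : (p %| q)%N := dvdn_gcdl q (d n0).
have [||B HB] := IH (q %/ p)%N; first exact: ltn_Pdiv.
  by rewrite divn_gt0 ?(ltnW p_gt1) ?(dvdn_leq q_gt0 pq).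
exists (maxn B n0.+1) => n; rewrite geq_max => /andP[Bn n0n].
rewrite -(divnK pq) coprimeMl HB //=.
apply: coprime_dvdl (dvdn_gcdr q (d n0)) _; apply: dcop => n0n'.
by rewrite n0n' ltnn in n0n.
Qed.

Lemma finite_seqs (T : eqType) (V : seq T) l :
  exists L : seq (seq T), forall s, size s = l -> {subset s <= V} -> s \in L.
Proof.
elim: l => [|l [L HL]].
  by exists [:: [::]] => -[|? ?] //; rewrite mem_head.
exists [seq a :: t | a <- V, t <- L] => -[//|a s] /= [sl] sV.
apply: (allpairs_f (fun a t => a :: t)); first by apply: sV; rewrite mem_head.
by apply: HL => // b bs; apply: sV; rewrite inE bs orbT.
Qed.

Section GeneratedMonoid.

Variable g : nat -> rat.
Local Notation G := (gen_monoid g).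

Lemma gen_monoid_atomic :
  (forall n, exists s : seq rat,
     (forall a, a \in s -> is_atom G a) /\ g n = \sum_(a <- s) a) ->
  atomic G.
Proof.
move=> gen_atoms x [s ->]; elim: s => [|i s [t [t_atoms st]]].
  by exists [::]; rewrite !big_nil.
have [r [r_atoms gir]] := gen_atoms i.
exists (r ++ t); split; last by rewrite big_cons big_cat gir st.
by move=> a; rewrite mem_cat => /orP[/r_atoms | /t_atoms].
Qed.

Lemma atom_gen_monoid (g_neq0 : forall n, g n != 0) a :
  is_atom G a -> exists n, a = g n.
Proof.
move=> [[s ->] [+ a_atom]]; case: s a_atom => [|i s].
  by rewrite big_nil eqxx.
rewrite big_cons => a_atom _.
have [||gi0|s0] := a_atom (g i) (\sum_(j <- s) g j) _ _ (erefl _).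
- by exists [:: i]; rewrite big_seq1.
- by exists s.
- by have := g_neq0 i; rewrite gi0 eqxx.
- by exists i; rewrite s0 addr0.
Qed.

Hypothesis g_gt0 : forall n, 0 < g n.

Lemma gen_monoid_ge0 x : G x -> 0 <= x.
Proof. by move=> [s ->]; apply: sumr_ge0 => i _; apply: ltW. Qed.

Lemma gen_le_sum s n : n \in s -> g n <= \sum_(i <- s) g i.
Proof.
move=> ns; rewrite (perm_big _ (perm_to_rem ns)) big_cons lerDl.
by apply: gen_monoid_ge0; exists (rem n s).
Qed.

Lemma gen_split_notin n x y :
  G x -> G y -> x != 0 -> y != 0 -> g n = x + y ->
  exists2 u : seq nat, n \notin u & g n = \sum_(i <- u) g i.
Proof.
move=> [s xs] [t yt] x_neq0 y_neq0 gnxy.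
have x_gt0 : 0 < x by rewrite lt_def x_neq0 gen_monoid_ge0 //; exists s.
have y_gt0 : 0 < y by rewrite lt_def y_neq0 gen_monoid_ge0 //; exists t.
exists (s ++ t); last by rewrite big_cat -xs -yt.
rewrite mem_cat; apply/norP; split; apply/negP => /gen_le_sum.
  by rewrite -xs; lra.
by rewrite -yt; lra.
Qed.

Lemma gen_atom n :
  (forall u, n \notin u -> g n <> \sum_(i <- u) g i) -> is_atom G (g n).
Proof.
move=> no_split; split; first by exists [:: n]; rewrite big_seq1.
split=> [|x y Gx Gy gnxy]; first by rewrite gt_eqF.
have [-> | x_neq0] := eqVneq x 0; first by left.
have [-> | y_neq0] := eqVneq y 0; first by right.
by have [u nu] := gen_split_notin Gx Gy x_neq0 y_neq0 gnxy; move/no_split: nu.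
Qed.

End GeneratedMonoid.

Section AlmostReciprocal.

Variables c d : nat -> nat.
Hypothesis cd : almost_reciprocal_data c d.
Local Notation g := (frac_seq c d).
Local Notation G := (gen_monoid g).

Lemma ltn_index_den n : (n < d n)%N.
Proof.
have [d0_gt0 dS _ _ _] := cd.
by elim: n => [|n IH] //; apply: leq_ltn_trans IH (dS n).
Qed.

Lemma den_gt0 n : (0 < d n)%N.
Proof. exact: leq_ltn_trans (ltn_index_den n). Qed.

Lemma frac_seq_gt0 n : 0 < g n.
Proof. by have [_ _ _ c_gt0 _] := cd; rewrite divr_gt0 ?ltr0n ?den_gt0. Qed.

Lemma frac_seq_neq0 n : g n != 0.
Proof. by rewrite gt_eqF ?frac_seq_gt0. Qed.

Lemma coprime_denom_frac_seq m n : m != n -> coprime_denom (d n) (g m).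
Proof.
have [_ _ dcop _ _] := cd; move=> /eqP mn.
exact: coprime_denom_divn (den_gt0 m) (dcop m n mn).
Qed.

Lemma sum_notin_den1 u n : n \notin u -> g n = \sum_(i <- u) g i -> d n = 1%N.
Proof.
have [_ _ _ _ cdcop] := cd; move=> nu gnu.
have : coprime_denom (d n) (g n).
  rewrite gnu big_seq; apply: coprime_denom_sum => i iu.
  by apply: coprime_denom_frac_seq; apply: contraNneq nu => <-.
move/(coprime_denom_dvdn (den_gt0 n))/gcdn_idPr => gcd_cd.
by rewrite -gcd_cd; apply: eqP (cdcop n).
Qed.

Lemma frac_seq_atom n : (1 < d n)%N -> is_atom G (g n).
Proof.
move=> dn_gt1; apply: (gen_atom frac_seq_gt0) => u nu gnu.
by rewrite (sum_notin_den1 nu gnu) in dn_gt1.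
Qed.

Lemma frac_seq_atoms n : exists s : seq rat,
  (forall a, a \in s -> is_atom G a) /\ g n = \sum_(a <- s) a.
Proof.
have [[u nu gnu] | no_split] :=
  classic (exists2 u, n \notin u & g n = \sum_(i <- u) g i); last first.
  exists [:: g n]; split; last by rewrite big_seq1.
  move=> a; rewrite inE => /eqP ->; apply: (gen_atom frac_seq_gt0) => u nu gnu.
  by apply: no_split; exists u.
have n0 : n = 0%N.
  by apply/eqP; rewrite -leqn0 -ltnS -(sum_notin_den1 nu gnu) ltn_index_den.
exists (map g u); split; last by rewrite big_map.
move=> _ /mapP[j ju ->]; apply: frac_seq_atom.
have j_gt0 : (0 < j)%N.
  by rewrite lt0n; apply: contraNneq nu => j0; rewrite n0 -j0.
exact: leq_ltn_trans j_gt0 (ltn_index_den j).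
Qed.

Lemma frac_seq_mulrn k n : g n *+ k = (k * c n)%:R / (d n)%:R.
Proof. by rewrite -[g n *+ k]mulr_natl /frac_seq mulrA natrM. Qed.

Lemma den_le_length x l s n :
  is_factorization_len G x l s -> coprime `|denq x| (d n) -> g n \in s ->
  (d n <= l)%N.
Proof.
have [_ _ _ _ cdcop] := cd; move=> [s_atoms [<- sx]] cx gns.
set k := count_mem (g n) s.
have k_gt0 : (0 < k)%N by rewrite /k -has_count has_pred1.
set rest := \sum_(b <- s | b != g n) b.
have rest_cd : coprime_denom (d n) rest.
  rewrite /rest big_seq_cond; apply: coprime_denom_sum => b /andP[bs bn].
  have [m bm] := atom_gen_monoid frac_seq_neq0 (s_atoms b bs).
  rewrite bm in bn *; apply: coprime_denom_frac_seq.
  by apply: contraNneq bn => ->.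
have : coprime_denom (d n) (g n *+ k).
  have -> : g n *+ k = x - rest by rewrite -sx (sum_count_mem s (g n)) addrK.
  exact: coprime_denomD (coprime_denom_denq cx) (coprime_denomN rest_cd).
rewrite frac_seq_mulrn => /(coprime_denom_dvdn (den_gt0 n)).
rewrite Gauss_dvdl; last by rewrite coprime_sym cdcop.
move/(dvdn_leq k_gt0)/leq_trans; apply.
by rewrite count_size.
Qed.

Lemma almost_reciprocal_LFFM : LFFM G.
Proof.
have [_ _ dcop _ _] := cd.
split=> [|x l _ _]; first exact: gen_monoid_atomic frac_seq_atoms.
have [|B HB] := coprime_eventually dcop (q := `|denq x|%N).
  by rewrite absz_gt0 denq_neq0.
have [L HL] := finite_seqs (map g (iota 0 (maxn B l))) l.
exists L => s fs; exists s; last exact: perm_refl.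
have [s_atoms [sl _]] := fs; apply: HL => // a sa.
have [n an] := atom_gen_monoid frac_seq_neq0 (s_atoms a sa).
rewrite an map_f // mem_iota add0n leq_max.
have [// | Bn] := ltnP n B.
have dn_le_l : (d n <= l)%N by apply: den_le_length fs (HB n Bn) _; rewrite -an.
by rewrite (leq_trans (ltn_index_den n) dn_le_l) orbT.
Qed.

End AlmostReciprocal.

Theorem corollary4p11 (M : rat -> Prop) : almost_reciprocal M -> LFFM M.
Proof.
move=> [c [d [cd HM]]].
have -> : M = gen_monoid (frac_seq c d).
  apply: functional_extensionality => x.
  exact: propositional_extensionality (HM x).
exact: almost_reciprocal_LFFM.
Qed.
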